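(* If the ISU decomposition of $R(t)-R(0)$ (with respect to $(\mathcal{T}_n(t))_{n\in\mathbb{N}}$) is independent of the update order, i.e. there is $(D_1(t),\ldots,D_m(t))$ with $D^{\pi}_{\pi(i)}(t)=D_i(t)$ for all $i$ and all $\pi\in\sigma_m$, then the ISU decomposition (for each update order), the ceteris paribus effects of the IOAT decomposition, and the averaged ISU decomposition all coincide and equal $(D_1(t),\ldots,D_m(t))$; moreover the IOAT interaction effect is zero.
   Context: Let $(\Omega,\mathcal{A},\mathbb{P})$ be a complete probability space with a right-continuous complete filtration. Let $X=(X_1,\ldots,X_m)$ be an adapted multivariate process (risk basis), $X^t$ the process stopped at $t$, and let $R(t)=\varrho(X^t)$, $t\ge 0$, for a mapping $\varrho$. Define the revaluation surplus surface $U(t_1,\ldots,t_m)=\varrho((X_1^{t_1},\ldots,X_m^{t_m}))$, so $R(t)=U(t,\ldots,t)$. For a partition $\mathcal{T}(t)=\{0=t_0<\cdots<t_k=t\}$, the SU (sequential updating) decomposition of $R(t)-R(0)$ is $D_i(t)=\sum_{l=0}^{k-1}\big(U(t_{l+1},\ldots,t_{l+1},t_l,\ldots,t_l)-U(t_{l+1},\ldots,t_{l+1},t_l,t_l,\ldots,t_l)\big)$, where in the first term the first $i$ arguments equal $t_{l+1}$ and in the second term the first $i-1$ arguments equal $t_{l+1}$ (rest equal $t_l$); i.e. risk factors are updated in the order $1,\ldots,m$. An update order is a permutation $\pi\in\sigma_m$ (the set of all permutations of $\{1,\ldots,m\}$), meaning the factors are updated in the order given by $\pi$ instead. For a sequence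 of partitions $\mathcal{T}_n(t)$ of $[0,t]$ with vanishing mesh, the ISU (infinitesimal sequential updating) decomposition $D(t)$ is the componentwise limit in probability of the SU decompositions w.r.t. $\mathcal{T}_n(t)$; $D^{\pi}(t)=(D^\pi_1(t),\ldots,D^\pi_m(t))$ denotes the ISU decomposition for update order $\pi$. The OAT (one-at-a-time) decomposition w.r.t. $\mathcal{T}(t)$ is $(D_1(t),\ldots,D_m(t),\overline{D}(t))$ with ceteris paribus effects $D_i(t)=\sum_{l=0}^{k-1}\big(U(t_l,\ldots,t_l,t_{l+1},t_l,\ldots,t_l)-U(t_l,\ldots,t_l)\big)$ ($t_{l+1}$ in the $i$-th argument only) and interaction effect $\overline{D}(t)=R(t)-R(0)-\sum_{i=1}^m D_i(t)$; the IOAT decomposition is the componentwise limit in probability of the OAT decompositions along $\mathcal{T}_n(t)$. The averaged ISU decomposition is $D_i(t)=\frac{1}{m!}\sum_{\pi\in\sigma_m}D^\pi_{\pi(i)}(t)$, $i=1,\ldots,m$. It was previously shown that the ISU decomposition is independent of update order iff for each update order it equals the ceteris paribus effects of the IOAT decomposition, in which case the interaction effect is zero. *)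

From HB Require Import structures.
From mathcomp Require Import all_boot all_order all_algebra all_fingroup.
From mathcomp Require Import all_classical all_reals all_analysis.
Set Implicit Arguments. Unset Strict Implicit. Unset Printing Implicit Defensive.
Import Order.TTheory GRing.Theory Num.Theory numFieldNormedType.Exports.
Local Open Scope classical_set_scope.
Local Open Scope ring_scope.

Section Defs.
Variable R : realType.

Section Prob.
Variables (d : measure_display) (T : measurableType d) (P : probability T R).

Definition complete_prob : Prop :=
  forall N : set T, measurable N -> P N = 0%E ->
    forall A : set T, A `<=` N -> measurable A.

Definition filtration (F : R -> set (set T)) : Prop :=
  (forall s, 0 <= s -> sigma_algebra setT (F s) /\ F s `<=` measurable) /\
  (forall s u, 0 <= s -> s <= u -> F s `<=` F u).

Definition right_continuous_filtration (F : R -> set (set T)) : Prop :=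
  forall s, 0 <= s -> F s = \bigcap_(u in `]s, +oo[%classic) F u.

Definition complete_filtration (F : R -> set (set T)) : Prop :=
  forall N : set T, measurable N -> P N = 0%E -> F 0 N.

Definition adapted (m : nat) (F : R -> set (set T))
    (X : 'I_m -> R -> T -> R) : Prop :=
  forall (i : 'I_m) s, 0 <= s ->
    forall B : set R, measurable B -> F s (X i s @^-1` B).

Definition conv_in_prob (Y : nat -> T -> R) (Z : T -> R) : Prop :=
  forall eps : R, 0 < eps ->
    (fun n => P [set w | eps <= `|Y n w - Z w|]) @ \oo --> 0%E.
End Prob.

Definition stopped (T : Type) (Y : R -> T -> R) (s : R) : R -> T -> R :=
  fun u w => Y (Num.min u s) w.

Definition surface (T : Type) (m : nat)
    (rho : ('I_m -> R -> T -> R) -> T -> R) (X : 'I_m -> R -> T -> R)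
    (s : 'I_m -> R) : T -> R :=
  rho (fun i => stopped (X i) (s i)).

Definition is_partition (t : R) (p : seq R) : Prop :=
  [/\ p != [::], head 0 p = 0, last 0 p = t & sorted (fun x y => x < y) p].

Definition mesh (p : seq R) : R :=
  \big[Num.max/0]_(l < (size p).-1) (nth 0 p l.+1 - nth 0 p l).

Definition psum (T : Type) (p : seq R) (f : R -> R -> T -> R) : T -> R :=
  fun w => \sum_(l < (size p).-1) f (nth 0 p l) (nth 0 p l.+1) w.

(* ---------- SU decomposition for update order pi ----------
   Update order pi : 'S_m means risk factor i is updated at position pi i
   (0-based), so the factors are updated in the order pi^-1(0),...,pi^-1(m-1).
   SU_pos pi p k is the k-th component of the SU decomposition for order pi,
   i.e. the effect of the factor updated at position k (the paper's D^pi_k);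
   hence the paper's D^pi_{pi(i)} (effect of factor i) is SU_pos pi p (pi i).
   For pi = 1 this is exactly the SU decomposition of the context. *)
Definition upd_times (m : nat) (pi : 'S_m) (k : nat) (a b : R) : 'I_m -> R :=
  fun j => if (pi j < k)%N then b else a.

Definition SU_pos (T : Type) (m : nat)
    (rho : ('I_m -> R -> T -> R) -> T -> R) (X : 'I_m -> R -> T -> R)
    (pi : 'S_m) (p : seq R) (k : 'I_m) : T -> R :=
  psum p (fun a b w =>
    surface rho X (upd_times pi k.+1 a b) w - surface rho X (upd_times pi k a b) w).

Definition oat_times (m : nat) (i : 'I_m) (a b : R) : 'I_m -> R :=
  fun j => if j == i then b else a.

Definition OAT_cp (T : Type) (m : nat)
    (rho : ('I_m -> R -> T -> R) -> T -> R) (X : 'I_m -> R -> T -> R)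
    (p : seq R) (i : 'I_m) : T -> R :=
  psum p (fun a b w =>
    surface rho X (oat_times i a b) w - surface rho X (fun _ => a) w).

Definition OAT_int (T : Type) (m : nat)
    (rho : ('I_m -> R -> T -> R) -> T -> R) (X : 'I_m -> R -> T -> R)
    (t : R) (p : seq R) : T -> R :=
  fun w => surface rho X (fun _ => t) w - surface rho X (fun _ => 0) w
           - \sum_(i < m) OAT_cp rho X p i w.

Definition avg_ISU (T : Type) (m : nat) (Dpi : 'S_m -> 'I_m -> T -> R)
    (i : 'I_m) : T -> R :=
  fun w => (m`!%:R)^-1 * \sum_(pi : 'S_m) Dpi pi (pi i) w.

End Defs.

From HB Require Import structures.
From mathcomp Require Import all_boot all_order all_algebra all_fingroup.
From mathcomp Require Import all_classical all_reals all_analysis.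
From mathcomp Require Import lra measurable_realfun.
Set Implicit Arguments. Unset Strict Implicit. Unset Printing Implicit Defensive.
Import Order.TTheory GRing.Theory Num.Theory numFieldNormedType.Exports.
Local Open Scope classical_set_scope.
Local Open Scope ring_scope.

(* Updating factor i first makes its SU effect the ceteris paribus effect of i,
   so order independence forces the OAT effect of i to converge to D_i.  The SU
   effects of any single order telescope to R(t) - R(0), hence the OAT
   interaction effect is the sum over k of the SU effect of k minus its OAT
   effect, which converges to D_k - D_k = 0.  Averaging the constant D_i over
   all orders returns D_i. *)

Section ConvergenceInProbability.
Variables (R : realType) (d : measure_display) (T : measurableType d).
Variable P : probability T R.

Lemma measurable_norm_ge (eps : R) (f : T -> R) :
  measurable_fun setT f -> measurable [set w | eps <= `|f w|].
Proof.
move=> mf.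
have -> : [set w | eps <= `|f w|] = setT `&` (((fun x : R => `|x|) \o f) @^-1` `[eps, +oo[).
  by apply/seteqP; split => w /=; rewrite in_itv /= andbT; [|case].
exact: (measurableT_comp (@normr_measurable R setT) mf measurableT (measurable_itv _)).
Qed.

Lemma measurable_psum (p : seq R) (f : R -> R -> T -> R) :
  (forall a b, measurable_fun setT (f a b)) -> measurable_fun setT (psum p f).
Proof. by move=> mf; exact: measurable_sum. Qed.

Lemma conv_in_prob_add (Y1 Y2 : nat -> T -> R) (Z1 Z2 : T -> R) :
  (forall n, measurable_fun setT (Y1 n)) -> (forall n, measurable_fun setT (Y2 n)) ->
  measurable_fun setT Z1 -> measurable_fun setT Z2 ->
  conv_in_prob P Y1 Z1 -> conv_in_prob P Y2 Z2 ->
  conv_in_prob P (fun n w => Y1 n w + Y2 n w) (fun w => Z1 w + Z2 w).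
Proof.
move=> mY1 mY2 mZ1 mZ2 cvg1 cvg2 eps eps_gt0.
have eps2_gt0 : 0 < eps / 2 by rewrite divr_gt0.
have defined00 : ((0 : \bar R) +? 0)%E by [].
have cvg12 := cvgeD defined00 (cvg1 _ eps2_gt0) (cvg2 _ eps2_gt0).
rewrite adde0 in cvg12.
apply: (@squeeze_cvge _ _ _ _ (fun=> 0%E)); [|exact: cvg_cst|exact: cvg12].
apply: nearW => n.
rewrite measure_ge0 /=.
have mE1 := measurable_norm_ge (eps / 2) (measurable_funB (mY1 n) mZ1).
have mE2 := measurable_norm_ge (eps / 2) (measurable_funB (mY2 n) mZ2).
apply: le_trans (measureU2 P mE1 mE2).
apply: le_measure; rewrite ?inE; [|exact: measurableU|].
  apply: measurable_norm_ge; apply: measurable_funB; exact: measurable_funD.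
move=> w /=; rewrite opprD addrACA => eps_le.
have := ler_normD (Y1 n w - Z1 w) (Y2 n w - Z2 w).
case: (leP (eps / 2) `|Y1 n w - Z1 w|); first by left.
case: (leP (eps / 2) `|Y2 n w - Z2 w|); first by right.
lra.
Qed.

Lemma conv_in_prob_opp (Y : nat -> T -> R) (Z : T -> R) :
  conv_in_prob P Y Z -> conv_in_prob P (fun n w => - Y n w) (fun w => - Z w).
Proof.
move=> cvgYZ eps eps_gt0.
under eq_fun => n do under eq_set => w do rewrite -opprD normrN.
exact: cvgYZ.
Qed.

Lemma conv_in_prob_sub (Y1 Y2 : nat -> T -> R) (Z1 Z2 : T -> R) :
  (forall n, measurable_fun setT (Y1 n)) -> (forall n, measurable_fun setT (Y2 n)) ->
  measurable_fun setT Z1 -> measurable_fun setT Z2 ->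
  conv_in_prob P Y1 Z1 -> conv_in_prob P Y2 Z2 ->
  conv_in_prob P (fun n w => Y1 n w - Y2 n w) (fun w => Z1 w - Z2 w).
Proof.
move=> mY1 mY2 mZ1 mZ2 cvg1 cvg2.
apply: conv_in_prob_add => //; last exact: conv_in_prob_opp.
- by move=> n; exact: measurable_funN.
- exact: measurable_funN.
Qed.

Lemma conv_in_prob_sum (I : Type) (r : seq I) (Y : I -> nat -> T -> R) (Z : I -> T -> R) :
  (forall i n, measurable_fun setT (Y i n)) -> (forall i, measurable_fun setT (Z i)) ->
  (forall i, conv_in_prob P (Y i) (Z i)) ->
  conv_in_prob P (fun n w => \sum_(i <- r) Y i n w) (fun w => \sum_(i <- r) Z i w).
Proof.
move=> mY mZ cvgYZ; elim: r => [|i r IHr] eps eps_gt0.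
  under eq_fun => n do under eq_set => w do rewrite !big_nil subrr normr0.
  have -> : [set w : T | eps <= 0] = set0 by apply/seteqP; split => w //=; lra.
  rewrite measure0; exact: cvg_cst.
under eq_fun => n do under eq_set => w do rewrite !big_cons.
apply: conv_in_prob_add eps_gt0 => //; try exact: measurable_sum.
by move=> n; exact: measurable_sum.
Qed.

End ConvergenceInProbability.

Section Decompositions.
Variables (R : realType) (T : Type) (m : nat).
Variables (rho : ('I_m -> R -> T -> R) -> T -> R) (X : 'I_m -> R -> T -> R).

Lemma psum_telescope (f : R -> T -> R) (w : T) (t : R) (p : seq R) :
  is_partition t p -> psum p (fun a b w => f b w - f a w) w = f t w - f 0 w.
Proof.
case=> p_neq0 p_head p_last _; rewrite /psum.
rewrite -(big_mkord xpredT (fun l => f (nth 0 p l.+1) w - f (nth 0 p l) w)).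
by rewrite telescope_sumr // nth_last nth0 p_head p_last.
Qed.

Lemma upd_times0 (pi : 'S_m) (a b : R) : upd_times pi 0 a b = fun=> a.
Proof. by apply: funext => j; rewrite /upd_times ltn0. Qed.

Lemma upd_times_all (pi : 'S_m) (a b : R) : upd_times pi m a b = fun=> b.
Proof. by apply: funext => j; rewrite /upd_times ltn_ord. Qed.

Lemma upd_times1 (pi : 'S_m) (i : 'I_m) (a b : R) :
  pi i = 0%N :> nat -> upd_times pi 1 a b = oat_times i a b.
Proof.
move=> pi_i0; apply: funext => j; rewrite /upd_times /oat_times ltnS leqn0.
by rewrite -pi_i0 -[_ == _ :> nat]/(pi j == pi i) (inj_eq perm_inj).
Qed.

Lemma sum_SU_pos (pi : 'S_m) (t : R) (p : seq R) (w : T) :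
  is_partition t p ->
  \sum_(k < m) SU_pos rho X pi p k w =
  surface rho X (fun=> t) w - surface rho X (fun=> 0) w.
Proof.
move=> p_part; rewrite -(psum_telescope (fun s => surface rho X (fun=> s)) w p_part).
rewrite /SU_pos /psum exchange_big /=; apply: eq_bigr => l _.
pose U k := surface rho X (upd_times pi k (nth 0 p l) (nth 0 p l.+1)) w.
rewrite -(big_mkord xpredT (fun k => U k.+1 - U k)) telescope_sumr //.
by rewrite /U upd_times_all upd_times0.
Qed.

Lemma OAT_cp_SU_pos_first (pi : 'S_m) (i : 'I_m) (p : seq R) :
  pi i = 0%N :> nat -> OAT_cp rho X p i = SU_pos rho X pi p (pi i).
Proof.
move=> pi_i0; apply: funext => w; apply: eq_bigr => l _.
by rewrite pi_i0 (upd_times1 _ _ pi_i0) upd_times0.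
Qed.

Lemma OAT_int_SU_pos (t : R) (p : seq R) :
  is_partition t p ->
  OAT_int rho X t p = fun w => \sum_(k < m) (SU_pos rho X 1 p k w - OAT_cp rho X p k w).
Proof.
by move=> p_part; apply: funext => w; rewrite sumrB (sum_SU_pos _ _ p_part).
Qed.

End Decompositions.

Lemma avg_ISU_const (R : realType) (T : Type) (m : nat)
    (Dpi : 'S_m -> 'I_m -> T -> R) (D : 'I_m -> T -> R) (i : 'I_m) :
  (forall pi : 'S_m, Dpi pi (pi i) = D i) -> avg_ISU Dpi i = D i.
Proof.
move=> Dpi_i; apply: funext => w; rewrite /avg_ISU.
under eq_bigr => pi _ do rewrite Dpi_i.
by rewrite sumr_const card_Sn -[D i w *+ _]mulr_natl mulKf // pnatr_eq0 -lt0n fact_gt0.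
Qed.

Theorem theorem7p3 (R : realType) (d : measure_display) (T : measurableType d)
    (P : probability T R) (F : R -> set (set T)) (m : nat)
    (X : 'I_m -> R -> T -> R) (rho : ('I_m -> R -> T -> R) -> T -> R)
    (t : R) (Tn : nat -> seq R)
    (Dpi : 'S_m -> 'I_m -> T -> R) (D : 'I_m -> T -> R) :
  complete_prob P ->
  filtration F -> right_continuous_filtration F -> complete_filtration P F ->
  adapted F X ->
  (* rho maps stopped risk bases to random variables *)
  (forall s : 'I_m -> R, measurable_fun setT (surface rho X s)) ->
  0 <= t ->
  (forall n, is_partition t (Tn n)) ->
  mesh (Tn n) @[n --> \oo] --> (0 : R) ->
  (* Dpi pi is the ISU decomposition for update order pi *)
  (forall (pi : 'S_m) (k : 'I_m), measurable_fun setT (Dpi pi k)) ->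
  (forall (pi : 'S_m) (k : 'I_m),
      conv_in_prob P (fun n => SU_pos rho X pi (Tn n) k) (Dpi pi k)) ->
  (* independence of the update order *)
  (forall (pi : 'S_m) (i : 'I_m), Dpi pi (pi i) = D i) ->
  [/\ (forall (pi : 'S_m) (i : 'I_m), Dpi pi (pi i) = D i),
      (forall i : 'I_m, conv_in_prob P (fun n => OAT_cp rho X (Tn n) i) (D i)),
      (forall i : 'I_m, avg_ISU Dpi i = D i) &
      conv_in_prob P (fun n => OAT_int rho X t (Tn n)) (fun _ => 0)].
Proof.
move=> _ _ _ _ _ mU _ Tn_part _ mDpi cvgSU DpiE.
have mSU pi p k : measurable_fun setT (SU_pos rho X pi p k).
  by apply: measurable_psum => a b; exact: measurable_funB.
have mOAT p i : measurable_fun setT (OAT_cp rho X p i).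
  by apply: measurable_psum => a b; exact: measurable_funB.
have mD i : measurable_fun setT (D i) by rewrite -(DpiE 1%g); exact: mDpi.
have cvgOAT i : conv_in_prob P (fun n => OAT_cp rho X (Tn n) i) (D i).
  have [pi pi_i0] : exists pi : 'S_m, pi i = 0%N :> nat.
    by exists (tperm i (Ordinal (leq_ltn_trans (leq0n i) (ltn_ord i)))); rewrite tpermL.
  suff -> : (fun n => OAT_cp rho X (Tn n) i) = fun n => SU_pos rho X pi (Tn n) (pi i).
    by rewrite -(DpiE pi i); exact: cvgSU.
  by apply: funext => n; exact: OAT_cp_SU_pos_first.
split=> // [i|]; first exact: avg_ISU_const.
have -> : (fun n => OAT_int rho X t (Tn n)) =
          fun n w => \sum_(k < m) (SU_pos rho X 1 (Tn n) k w - OAT_cp rho X (Tn n) k w).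
  by apply: funext => n; exact: OAT_int_SU_pos.
have -> : (fun _ => 0) = (fun w => \sum_(k < m) (D k w - D k w)) :> (T -> R).
  by apply: funext => w; rewrite big1 // => k _; rewrite subrr.
apply: conv_in_prob_sum => [k n|k|k]; first exact: measurable_funB.
  exact: measurable_funB.
apply: conv_in_prob_sub => //; rewrite -[D k](DpiE 1%g) perm1; exact: cvgSU.
Qed.
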